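(* Let $\mathfrak A=\{(a,\alpha)\in\mathbb R^2:-1\le\alpha<a\le1\}$ and $\Omega=\{(\lambda,\mu)\in\mathbb R^2:\lambda\ge1,\ \mu\ge1\}$. Consider the system $$ \begin{cases} 2\,(a+\alpha)(3-a\alpha-a-\alpha)(3-a\alpha+a+\alpha)+(\lambda-\mu)(a-\alpha)^3=0,\\ (\lambda+\mu)^2(a-\alpha)^6=4\,(3+a\alpha)^3(1-a\alpha)(2+a+\alpha)(2-a-\alpha). \end{cases} $$ This system defines a one-to-one correspondence between $\mathfrak A$ and $\Omega$ (for each $(a,\alpha)\in\mathfrak A$ there is exactly one $(\lambda,\mu)\in\Omega$ solving it together with $(a,\alpha)$, and this assignment is a bijection $\mathfrak A\to\Omega$). Moreover, this bijection maps $\{(a,\alpha):-1<\alpha<a<1\}$ onto the interior $\{\lambda>1,\mu>1\}$ of $\Omega$, the side $\{a=1\}$ of $\mathfrak A$ onto the ray $\{\lambda=1\}\subset\Omega$, the side $\{\alpha=-1\}$ onto the ray $\{\mu=1\}\subset\Omega$, and the vertex $(a,\alpha)=(1,-1)$ onto the point $(\lambda,\mu)=(1,1)$. *)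

From Stdlib Require Export Reals.
Open Scope R_scope.

Definition inA (a al : R) : Prop := -1 <= al /\ al < a /\ a <= 1.

Definition inOmega (l m : R) : Prop := 1 <= l /\ 1 <= m.

Definition sys (a al l m : R) : Prop :=
  2 * (a + al) * (3 - a * al - a - al) * (3 - a * al + a + al)
    + (l - m) * (a - al) ^ 3 = 0
  /\
  (l + m) ^ 2 * (a - al) ^ 6
    = 4 * (3 + a * al) ^ 3 * (1 - a * al) * (2 + a + al) * (2 - a - al).

(* With Q and D the polynomials on the right of the system, the only solution with
   lambda + mu > 0 is lambda = (sqrt Q - D) / (a - alpha)^3, mu = (sqrt Q + D) / (a - alpha)^3.
   Write lambda = sqrt U (1 - K) and mu = sqrt U (1 + K) with U = Q / (a - alpha)^6 and
   K = D / sqrt Q.  On the parameter domain U is strictly decreasing in a and increasing in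
   alpha, while K is strictly increasing in both; every sign needed for this (and D^2 < Q) is
   certified by a polynomial with nonnegative coefficients in 1 - a, 1 + alpha, a - alpha.
   Hence lambda decreases in a and equals 1 exactly at a = 1, mu behaves likewise under the
   symmetry (a, alpha) -> (-alpha, -a), and (U, K), i.e. (lambda, mu), determines
   (a, alpha).  For surjectivity onto Omega: lambda blows up as a -> alpha, so each level set
   {lambda = l0} is the graph of a continuous function of alpha, along which mu runs from 1
   at alpha = -1 to arbitrarily large values as alpha -> 1; the intermediate value theorem
   finishes. *)

From Stdlib Require Import Reals.
From Coquelicot Require Import Coquelicot.
From Stdlib Require Import Lra Psatz ClassicalEpsilon.
Open Scope R_scope.

Definition Qp (a b : R) : R := (3 + a*b)^3 * (1 - a*b) * (2 + a + b) * (2 - a - b).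
Definition Dp (a b : R) : R := (a + b) * (3 - a*b - a - b) * (3 - a*b + a + b).

Definition Qp_a (a b : R) : R :=
  3 * (3 + a*b)^2 * b * (1 - a*b) * (2 + a + b) * (2 - a - b)
  - b * (3 + a*b)^3 * (2 + a + b) * (2 - a - b)
  + (3 + a*b)^3 * (1 - a*b) * (2 - a - b) - (3 + a*b)^3 * (1 - a*b) * (2 + a + b).
Definition Dp_a (a b : R) : R :=
  (3 - a*b - a - b) * (3 - a*b + a + b) + (a + b) * (- b - 1) * (3 - a*b + a + b)
  + (a + b) * (3 - a*b - a - b) * (1 - b).

(* Nonnegativity certificates, evaluated at x = 1 - a, y = 1 + b, z = a - b. *)
Definition certE (x y z : R) : R :=
    (1/4)*z^8 + (5/2)*(y*z^7) + (25/4)*(y^2*z^6) + 6*(y^3*z^5) + 2*(y^4*z^4) +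
    (5/2)*(x*z^7) + (57/2)*(x*y*z^6) + 84*(x*y^2*z^5) + 94*(x*y^3*z^4) +
    36*(x*y^4*z^3) + (25/4)*(x^2*z^6) + 84*(x^2*y*z^5) + 276*(x^2*y^2*z^4) +
    342*(x^2*y^3*z^3) + 144*(x^2*y^4*z^2) + 6*(x^3*z^5) + 94*(x^3*y*z^4) +
    342*(x^3*y^2*z^3) + 468*(x^3*y^3*z^2) + 216*(x^3*y^4*z) + 2*(x^4*z^4) +
    36*(x^4*y*z^3) + 144*(x^4*y^2*z^2) + 216*(x^4*y^3*z) + 108*(x^4*y^4).

Definition certU (x y z : R) : R :=
    (1/2)*z^10 + (11/2)*(y*z^9) + (53/2)*(y^2*z^8) + (147/2)*(y^3*z^7) +
    129*(y^4*z^6) + 147*(y^5*z^5) + 106*(y^6*z^4) + 44*(y^7*z^3) + 8*(y^8*z^2) +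
    (11/2)*(x*z^9) + 53*(x*y*z^8) + (445/2)*(x*y^2*z^7) + 534*(x*y^3*z^6) +
    804*(x*y^4*z^5) + 780*(x*y^5*z^4) + 479*(x*y^6*z^3) + 172*(x*y^7*z^2) +
    28*(x*y^8*z) + 26*(x^2*z^8) + 220*(x^2*y*z^7) + 801*(x^2*y^2*z^6) +
    1641*(x^2*y^3*z^5) + (4131/2)*(x^2*y^4*z^4) + (3255/2)*(x^2*y^5*z^3) +
    778*(x^2*y^6*z^2) + 206*(x^2*y^7*z) + 24*(x^2*y^8) + 69*(x^3*z^7) +
    516*(x^3*y*z^6) + 1617*(x^3*y^2*z^5) + 2770*(x^3*y^3*z^4) +
    (5605/2)*(x^3*y^4*z^3) + 1676*(x^3*y^5*z^2) + 546*(x^3*y^6*z) + 72*(x^3*y^7) +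
    (225/2)*(x^4*z^6) + (1503/2)*(x^4*y*z^5) + (4005/2)*(x^4*y^2*z^4) +
    (5551/2)*(x^4*y^3*z^3) + 2122*(x^4*y^4*z^2) + 850*(x^4*y^5*z) + 144*(x^4*y^6) +
    (231/2)*(x^5*z^5) + 699*(x^5*y*z^4) + (3117/2)*(x^5*y^2*z^3) + 1648*(x^5*y^3*z^2) +
    854*(x^5*y^4*z) + 168*(x^5*y^5) + 73*(x^6*z^4) + 407*(x^6*y*z^3) +
    746*(x^6*y^2*z^2) + 534*(x^6*y^3*z) + 144*(x^6*y^4) + 26*(x^7*z^3) +
    136*(x^7*y*z^2) + 202*(x^7*y^2*z) + 72*(x^7*y^3) + 4*(x^8*z^2) + 20*(x^8*y*z) +
    24*(x^8*y^2).

Definition certK (x y z : R) : R :=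
    (1/2)*z^12 + (15/2)*(y*z^11) + (93/2)*(y^2*z^10) + (315/2)*(y^3*z^9) +
    321*(y^4*z^8) + 405*(y^5*z^7) + 310*(y^6*z^6) + 132*(y^7*z^5) + 24*(y^8*z^4) +
    (11/2)*(x*z^11) + 77*(x*y*z^10) + (881/2)*(x*y^2*z^9) + 1374*(x*y^3*z^8) +
    2592*(x*y^4*z^7) + 3060*(x*y^5*z^6) + 2225*(x*y^6*z^5) + 916*(x*y^7*z^4) +
    164*(x*y^8*z^3) + 26*(x^2*z^10) + 344*(x^2*y*z^9) + 1827*(x^2*y^2*z^8) +
    5241*(x^2*y^3*z^7) + (18099/2)*(x^2*y^4*z^6) + (19551/2)*(x^2*y^5*z^5) +
    6544*(x^2*y^6*z^4) + 2518*(x^2*y^7*z^3) + 432*(x^2*y^8*z^2) + 69*(x^3*z^9) +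
    876*(x^3*y*z^8) + 4347*(x^3*y^2*z^7) + 11422*(x^3*y^3*z^6) +
    (35541/2)*(x^3*y^4*z^5) + 17016*(x^3*y^5*z^4) + 9936*(x^3*y^6*z^3) +
    3312*(x^3*y^7*z^2) + 504*(x^3*y^8*z) + (225/2)*(x^4*z^8) + (2787/2)*(x^4*y*z^7) +
    (13017/2)*(x^4*y^2*z^6) + (31147/2)*(x^4*y^3*z^5) + 21382*(x^4*y^4*z^4) +
    17420*(x^4*y^5*z^3) + 8190*(x^4*y^6*z^2) + 2016*(x^4*y^7*z) + 216*(x^4*y^8) +
    (231/2)*(x^5*z^7) + 1419*(x^5*y*z^6) + (12597/2)*(x^5*y^2*z^5) +
    13648*(x^5*y^3*z^4) + 16060*(x^5*y^4*z^3) + 10476*(x^5*y^5*z^2) +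
    3528*(x^5*y^6*z) + 432*(x^5*y^7) + 73*(x^6*z^6) + 903*(x^6*y*z^5) +
    3858*(x^6*y^2*z^4) + 7560*(x^6*y^3*z^3) + 7326*(x^6*y^4*z^2) + 3384*(x^6*y^5*z) +
    648*(x^6*y^6) + 26*(x^7*z^5) + 328*(x^7*y*z^4) + 1370*(x^7*y^2*z^3) +
    2448*(x^7*y^3*z^2) + 1872*(x^7*y^4*z) + 432*(x^7*y^5) + 4*(x^8*z^4) +
    52*(x^8*y*z^3) + 216*(x^8*y^2*z^2) + 360*(x^8*y^3*z) + 216*(x^8*y^4).

Lemma Qp_sub_Dp2 a b : Qp a b - Dp a b ^ 2 = certE (1 - a) (1 + b) (a - b).
Proof. unfold Qp, Dp, certE; field. Qed.

Lemma Qp_a_cert a b : 6 * Qp a b - Qp_a a b * (a - b) = certU (1 - a) (1 + b) (a - b).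
Proof. unfold Qp, Qp_a, certU; field. Qed.

Lemma Dp_a_cert a b :
  2 * Dp_a a b * Qp a b - Dp a b * Qp_a a b = certK (1 - a) (1 + b) (a - b).
Proof. unfold Qp, Qp_a, Dp, Dp_a, certK; field. Qed.

Ltac nonneg_poly := repeat match goal with
  | |- 0 <= _ + _ => apply Rplus_le_le_0_compat
  | |- 0 <= _ * _ => apply Rmult_le_pos
  | |- 0 <= _ ^ _ => apply pow_le
  | |- _ => lra
  end.

Ltac pos_poly := repeat match goal with
  | |- 0 < _ + _ => apply Rplus_lt_le_0_compat; [|nonneg_poly]
  | |- 0 < _ * _ => apply Rmult_lt_0_compat
  | |- 0 < _ ^ _ => apply pow_lt
  | |- _ => lra
  end.

Lemma certE_pos x y z : 0 <= x -> 0 <= y -> 0 < z -> 0 < certE x y z.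
Proof. intros; unfold certE; pos_poly. Qed.

Lemma certE_ge x y z : 0 <= x -> 0 <= y -> 0 <= z -> 108 * (x^4 * y^4) <= certE x y z.
Proof.
  intros; unfold certE.
  match goal with |- _ <= ?S + _ => assert (0 <= S) by nonneg_poly end; lra.
Qed.

Lemma certU_pos x y z : 0 <= x -> 0 <= y -> 0 < z -> 0 < certU x y z.
Proof. intros; unfold certU; pos_poly. Qed.

Lemma certK_pos x y z : 0 <= x -> 0 <= y -> 0 < z -> 0 < certK x y z.
Proof. intros; unfold certK; pos_poly. Qed.

Lemma Dp2_lt_Qp a b : inA a b -> Dp a b ^ 2 < Qp a b.
Proof.
  intros [hb [hab ha]].
  assert (hE : 0 < certE (1 - a) (1 + b) (a - b)) by (apply certE_pos; lra).
  rewrite <- Qp_sub_Dp2 in hE; lra.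
Qed.

Lemma Qp_pos a b : inA a b -> 0 < Qp a b.
Proof. intros h; pose proof (Dp2_lt_Qp a b h); pose proof (pow2_ge_0 (Dp a b)); lra. Qed.

Definition U (a b : R) : R := Qp a b / (a - b)^6.
Definition K (a b : R) : R := Dp a b / sqrt (Qp a b).

Lemma U_pos a b : inA a b -> 0 < U a b.
Proof.
  intros h; pose proof (Qp_pos a b h); destruct h as [? [? ?]].
  apply Rdiv_lt_0_compat; [easy | apply pow_lt; lra].
Qed.

Lemma is_derive_opp_U a b : a <> b ->
  is_derive (fun a => - U a b) a ((6 * Qp a b - Qp_a a b * (a - b)) / (a - b)^7).
Proof.
  intros hab; unfold U, Qp, Qp_a; auto_derive.
  - change (~ (a - b) ^ 6 = 0); apply pow_nonzero; lra.
  - field; lra.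
Qed.

Lemma is_derive_Qp a b : is_derive (fun a => Qp a b) a (Qp_a a b).
Proof. unfold Qp, Qp_a; auto_derive; [easy | ring]. Qed.

Lemma is_derive_Dp a b : is_derive (fun a => Dp a b) a (Dp_a a b).
Proof. unfold Dp, Dp_a; auto_derive; [easy | ring]. Qed.

Lemma is_derive_K a b : 0 < Qp a b ->
  is_derive (fun a => K a b) a
    ((2 * Dp_a a b * Qp a b - Dp a b * Qp_a a b) / (2 * Qp a b * sqrt (Qp a b))).
Proof.
  intros hQ; unfold K.
  pose proof (sqrt_lt_R0 _ hQ) as hs.
  pose proof (sqrt_sqrt _ (Rlt_le _ _ hQ)) as hss.
  replace (_ / (2 * Qp a b * sqrt (Qp a b)))
    with ((Dp_a a b * sqrt (Qp a b) - Dp a b * (Qp_a a b / (2 * sqrt (Qp a b))))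
          / sqrt (Qp a b) ^ 2).
  - apply (is_derive_div (fun a => Dp a b) (fun a => sqrt (Qp a b))).
    + apply is_derive_Dp.
    + apply (is_derive_sqrt (fun a => Qp a b)); [apply is_derive_Qp | exact hQ].
    + lra.
  - set (s := sqrt (Qp a b)) in *; rewrite <- hss; field; lra.
Qed.

Lemma U_decr_a b x y : -1 <= b -> b < x -> x < y -> y <= 1 -> U y b < U x b.
Proof.
  intros hb hbx hxy hy; apply Ropp_lt_cancel.
  apply (incr_function_le (fun a => - U a b) x y
           (fun a => (6 * Qp a b - Qp_a a b * (a - b)) / (a - b)^7)); try (simpl; lra).
  - intros t ht1 ht2; simpl in ht1, ht2; apply is_derive_opp_U; lra.
  - intros t ht1 ht2; simpl in ht1, ht2; rewrite Qp_a_cert.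
    apply Rdiv_lt_0_compat; [apply certU_pos | apply pow_lt]; lra.
Qed.

Lemma K_incr_a b x y : -1 <= b -> b < x -> x < y -> y <= 1 -> K x b < K y b.
Proof.
  intros hb hbx hxy hy.
  apply (incr_function_le (fun a => K a b) x y
           (fun a => (2 * Dp_a a b * Qp a b - Dp a b * Qp_a a b)
                     / (2 * Qp a b * sqrt (Qp a b)))); try (simpl; lra).
  - intros t ht1 ht2; simpl in ht1, ht2; apply is_derive_K, Qp_pos; red; lra.
  - intros t ht1 ht2; simpl in ht1, ht2.
    assert (hQ : 0 < Qp t b) by (apply Qp_pos; red; lra).
    rewrite Dp_a_cert.
    apply Rdiv_lt_0_compat; [apply certK_pos; lra |].
    pose proof (sqrt_lt_R0 _ hQ); apply Rmult_lt_0_compat; lra.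
Qed.

Lemma inA_swap a b : inA a b -> inA (- b) (- a).
Proof. unfold inA; lra. Qed.

Lemma Qp_swap a b : Qp (- b) (- a) = Qp a b.
Proof. unfold Qp; ring. Qed.

Lemma Dp_swap a b : Dp (- b) (- a) = - Dp a b.
Proof. unfold Dp; ring. Qed.

Lemma U_swap a b : U (- b) (- a) = U a b.
Proof. unfold U; rewrite Qp_swap; f_equal; ring. Qed.

Lemma K_swap a b : K (- b) (- a) = - K a b.
Proof. unfold K; rewrite Qp_swap, Dp_swap; unfold Rdiv; ring. Qed.

Lemma U_incr_b a b b' : -1 <= b -> b < b' -> b' < a -> a <= 1 -> U a b < U a b'.
Proof. intros; rewrite <- (U_swap a b), <- (U_swap a b'); apply U_decr_a; lra. Qed.

Lemma K_incr_b a b b' : -1 <= b -> b < b' -> b' < a -> a <= 1 -> K a b < K a b'.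
Proof.
  intros; apply Ropp_lt_cancel; rewrite <- (K_swap a b), <- (K_swap a b').
  apply K_incr_a; lra.
Qed.

Lemma UK_separate a b a' b' : inA a b -> inA a' b' -> a < a' ->
  U a' b' < U a b \/ K a b < K a' b'.
Proof.
  intros [hb [hab ha]] [hb' [hab' ha']] hlt.
  destruct (Rlt_le_dec b b') as [hbb | hbb].
  - right; apply Rlt_trans with (K a' b).
    + apply K_incr_a; lra.
    + apply K_incr_b; lra.
  - left; apply Rle_lt_trans with (U a' b).
    + destruct (Req_dec b' b) as [-> | hne]; [lra |].
      apply Rlt_le, U_incr_b; lra.
    + apply U_decr_a; lra.
Qed.

Lemma UK_inj a b a' b' : inA a b -> inA a' b' ->
  U a b = U a' b' -> K a b = K a' b' -> a = a' /\ b = b'.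
Proof.
  intros h h' hU hK; destruct (Rtotal_order a a') as [hlt | [-> | hlt]].
  - destruct (UK_separate a b a' b' h h' hlt); lra.
  - split; [reflexivity |].
    destruct h as [hb [hab ha]], h' as [hb' [hab' ha']].
    destruct (Rtotal_order b b') as [hbb | [-> | hbb]]; [| reflexivity |].
    + pose proof (K_incr_b a' b b'); lra.
    + pose proof (K_incr_b a' b' b); lra.
  - destruct (UK_separate a' b' a b h' h hlt); lra.
Qed.

Definition lam (a b : R) : R := (sqrt (Qp a b) - Dp a b) / (a - b)^3.
Definition mu (a b : R) : R := (sqrt (Qp a b) + Dp a b) / (a - b)^3.

Lemma mu_swap a b : mu a b = lam (- b) (- a).
Proof.
  unfold mu, lam; rewrite Qp_swap, Dp_swap.
  replace (- b - - a) with (a - b) by ring; unfold Rdiv; ring.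
Qed.

Lemma sqrt_U a b : b < a -> sqrt (U a b) = sqrt (Qp a b) / (a - b)^3.
Proof.
  intros hab; unfold U.
  replace ((a - b)^6) with (((a - b)^3)^2) by ring.
  rewrite sqrt_div_alt by (apply pow_lt, pow_lt; lra).
  rewrite sqrt_pow2 by (apply pow_le; lra); reflexivity.
Qed.

Lemma lam_UK a b : inA a b -> lam a b = sqrt (U a b) * (1 - K a b).
Proof.
  intros h; pose proof (sqrt_lt_R0 _ (Qp_pos a b h)); destruct h as [hb [hab ha]].
  rewrite sqrt_U by lra; unfold lam, K; field; lra.
Qed.

Lemma mu_UK a b : inA a b -> mu a b = sqrt (U a b) * (1 + K a b).
Proof.
  intros h; pose proof (sqrt_lt_R0 _ (Qp_pos a b h)); destruct h as [hb [hab ha]].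
  rewrite sqrt_U by lra; unfold mu, K; field; lra.
Qed.

Lemma K_bounds a b : inA a b -> -1 < K a b < 1.
Proof.
  intros h; pose proof (Dp2_lt_Qp a b h) as hD; pose proof (Qp_pos a b h) as hQ.
  pose proof (sqrt_lt_R0 _ hQ); pose proof (sqrt_sqrt _ (Rlt_le _ _ hQ)).
  unfold K; split.
  - apply Rlt_div_r; nra.
  - apply Rlt_div_l; nra.
Qed.

Lemma lam_decr_a b x y : -1 <= b -> b < x -> x < y -> y <= 1 -> lam y b < lam x b.
Proof.
  intros hb hbx hxy hy.
  assert (hx : inA x b) by (red; lra); assert (hy' : inA y b) by (red; lra).
  rewrite (lam_UK x b hx), (lam_UK y b hy').
  assert (hW : sqrt (U y b) < sqrt (U x b)).
  { apply sqrt_lt_1_alt; split; [apply Rlt_le, U_pos, hy' | apply U_decr_a; lra]. }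
  pose proof (K_incr_a b x y hb hbx hxy hy); pose proof (K_bounds y b hy').
  pose proof (sqrt_pos (U y b)); nra.
Qed.

Lemma lam_one b : -1 <= b < 1 -> lam 1 b = 1.
Proof.
  intros hb; unfold lam.
  replace (Qp 1 b) with (((3 + b)^2 * (1 - b))^2) by (unfold Qp; ring).
  rewrite sqrt_pow2 by (apply Rmult_le_pos; [apply pow2_ge_0 | lra]).
  unfold Dp; field; lra.
Qed.

Lemma lam_ge1 a b : inA a b -> 1 <= lam a b /\ (lam a b = 1 <-> a = 1).
Proof.
  intros [hb [hab ha]]; destruct (Req_dec a 1) as [-> | ha1].
  - rewrite lam_one by lra; lra.
  - pose proof (lam_decr_a b a 1 hb hab ltac:(lra) ltac:(lra)) as hlt.
    rewrite lam_one in hlt by lra; lra.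
Qed.

Lemma mu_ge1 a b : inA a b -> 1 <= mu a b /\ (mu a b = 1 <-> b = -1).
Proof.
  intros h; rewrite mu_swap; destruct (lam_ge1 _ _ (inA_swap a b h)); split; [easy | lra].
Qed.

Lemma sys_lam_mu a b : inA a b -> sys a b (lam a b) (mu a b).
Proof.
  intros h; pose proof (Qp_pos a b h) as hQ; destruct h as [hb [hab ha]].
  assert ((a - b)^3 <> 0) by (apply pow_nonzero; lra).
  unfold sys, lam, mu; split.
  - unfold Dp; field; lra.
  - replace ((a - b)^6) with (((a - b)^3)^2) by ring.
    replace ((sqrt (Qp a b) - Dp a b) / (a - b)^3 + (sqrt (Qp a b) + Dp a b) / (a - b)^3)
      with (2 * sqrt (Qp a b) / (a - b)^3) by (field; lra).
    unfold Rdiv; rewrite !Rpow_mult_distr, pow2_sqrt, pow_inv by lra.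
    unfold Qp; field; lra.
Qed.

Lemma sys_solution a b l m : inA a b -> inOmega l m -> sys a b l m ->
  l = lam a b /\ m = mu a b.
Proof.
  intros h [hl hm] [e1 e2]; destruct h as [hb [hab ha]].
  assert (hz : 0 < (a - b)^3) by (apply pow_lt; lra).
  assert (hs : sqrt (Qp a b) = (l + m) * (a - b)^3 / 2).
  { replace (Qp a b) with (((l + m) * (a - b)^3 / 2)^2).
    - apply sqrt_pow2; apply Rmult_le_pos; [apply Rmult_le_pos |]; lra.
    - replace ((a - b)^6) with (((a - b)^3)^2) in e2 by ring; unfold Qp; nra. }
  assert (hD : Dp a b = - (l - m) * (a - b)^3 / 2) by (unfold Dp; lra).
  unfold lam, mu; rewrite hs, hD; split; field; lra.
Qed.

Lemma lam_mu_inj a b a' b' : inA a b -> inA a' b' ->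
  lam a b = lam a' b' -> mu a b = mu a' b' -> a = a' /\ b = b'.
Proof.
  intros h h' el em.
  assert (hW : forall x y, inA x y -> sqrt (U x y) = (lam x y + mu x y) / 2).
  { intros x y hxy; rewrite lam_UK, mu_UK by exact hxy; field. }
  assert (hK : forall x y, inA x y -> K x y = (mu x y - lam x y) / (mu x y + lam x y)).
  { intros x y hxy; pose proof (sqrt_lt_R0 _ (U_pos x y hxy)).
    rewrite lam_UK, mu_UK by exact hxy; field; lra. }
  apply UK_inj; auto.
  - rewrite <- (sqrt_sqrt (U a b)), <- (sqrt_sqrt (U a' b'))
      by (apply Rlt_le, U_pos; auto).
    rewrite (hW a b h), (hW a' b' h'), el, em; reflexivity.
  - rewrite (hK a b h), (hK a' b' h'), el, em; reflexivity.
Qed.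

Lemma lam_continuous_a a b : inA a b -> continuity_pt (fun a => lam a b) a.
Proof.
  intros h; pose proof (Qp_pos a b h) as hQ; destruct h as [hb [hab ha]].
  assert ((a - b)^3 <> 0) by (apply pow_nonzero; lra).
  apply continuity_pt_filterlim, (ex_derive_continuous (fun a => lam a b)).
  unfold lam, Qp, Dp in *; auto_derive; auto.
Qed.

Lemma lam_continuous_b a b : inA a b -> continuity_pt (fun b => lam a b) b.
Proof.
  intros h; pose proof (Qp_pos a b h) as hQ; destruct h as [hb [hab ha]].
  assert ((a - b)^3 <> 0) by (apply pow_nonzero; lra).
  apply continuity_pt_filterlim, (ex_derive_continuous (fun b => lam a b)).
  unfold lam, Qp, Dp in *; auto_derive; auto.
Qed.

Lemma sqrt_Qp_le a b : inA a b -> sqrt (Qp a b) <= 46.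
Proof.
  intros [hb [hab ha]]; rewrite <- (sqrt_pow2 46) by lra; apply sqrt_le_1_alt.
  assert (0 <= 3 + a * b <= 4) by nra; assert (0 <= 1 - a * b <= 2) by nra.
  assert ((3 + a * b)^3 <= 4^3) by (apply pow_incr; lra).
  assert (0 <= (3 + a * b)^3) by (apply pow_le; lra).
  assert (0 <= 2 + a + b <= 4) by lra; assert (0 <= 2 - a - b <= 4) by lra.
  apply Rle_trans with (4^3 * 2 * 4 * 4); [| lra].
  unfold Qp; repeat apply Rmult_le_compat; try lra;
    repeat apply Rmult_le_pos; lra.
Qed.

(* lam = (Qp - Dp^2) / ((sqrt Qp + Dp) (a - b)^3), and sqrt Qp + Dp < 2 * 46. *)
Lemma lam_ge_gap a b : inA a b -> (Qp a b - Dp a b ^ 2) / (92 * (a - b)^3) <= lam a b.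
Proof.
  intros h; pose proof (lam_ge1 a b h) as [hl _].
  pose proof (sqrt_Qp_le a b h) as hs46; pose proof (Dp2_lt_Qp a b h) as hDQ.
  pose proof (Qp_pos a b h) as hQ; pose proof (sqrt_sqrt _ (Rlt_le _ _ hQ)) as hss.
  pose proof (sqrt_pos (Qp a b)).
  assert (hD : Dp a b < 46) by nra.
  destruct h as [hb [hab ha]].
  replace ((Qp a b - Dp a b ^ 2) / (92 * (a - b)^3))
    with (lam a b * ((sqrt (Qp a b) + Dp a b) / 92)).
  - rewrite <- (Rmult_1_r (lam a b)) at 2; apply Rmult_le_compat_l; lra.
  - unfold lam; set (s := sqrt (Qp a b)) in *; rewrite <- hss.
    field; lra.
Qed.

Lemma lam_m1_ge a : -1 < a <= 1 -> 4 / (1 + a)^2 <= lam a (-1).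
Proof.
  intros ha.
  assert (hl : lam a (-1) = ((3 - a)^2 + 8 * (1 - a)) / (1 + a)^2).
  { unfold lam; replace (Qp a (-1)) with (((3 - a)^2 * (1 + a))^2) by (unfold Qp; ring).
    rewrite sqrt_pow2 by (apply Rmult_le_pos; [apply pow2_ge_0 | lra]).
    unfold Dp; field; lra. }
  rewrite hl; unfold Rdiv; apply Rmult_le_compat_r.
  - apply Rlt_le, Rinv_0_lt_compat, pow_lt; lra.
  - nra.
Qed.

Lemma lam_unbounded b l0 : -1 <= b < 1 -> 1 <= l0 -> exists a, b < a <= 1 /\ l0 <= lam a b.
Proof.
  intros hb hl; destruct (Rle_lt_or_eq_dec (-1) b (proj1 hb)) as [hb1 | <-].
  (* For a - b = z small, Qp - Dp^2 >= 108 x^4 y^4 stays >= 92 c while (a - b)^3 -> 0. *)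
  - set (c := 108 * ((1 - b) / 2)^4 * (1 + b)^4 / 92).
    assert (hc : 0 < c).
    { unfold c; apply Rdiv_lt_0_compat; [| lra].
      apply Rmult_lt_0_compat; [apply Rmult_lt_0_compat; [lra |] |]; apply pow_lt; lra. }
    set (z := Rmin 1 (Rmin ((1 - b) / 2) (c / l0))).
    assert (hz : 0 < z).
    { apply Rmin_glb_lt; [lra |]; apply Rmin_glb_lt; [lra | apply Rdiv_lt_0_compat; lra]. }
    assert (hz1 : z <= 1) by apply Rmin_l.
    assert (hz2 : z <= (1 - b) / 2) by (eapply Rle_trans; [apply Rmin_r | apply Rmin_l]).
    assert (hz3 : z <= c / l0) by (eapply Rle_trans; [apply Rmin_r | apply Rmin_r]).
    exists (b + z); split; [lra |].
    assert (h : inA (b + z) b) by (red; lra).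
    assert (hgap : 92 * c <= Qp (b + z) b - Dp (b + z) b ^ 2).
    { rewrite Qp_sub_Dp2; eapply Rle_trans; [| apply certE_ge; lra].
      assert (((1 - b) / 2)^4 <= (1 - (b + z))^4) by (apply pow_incr; lra).
      assert (0 <= (1 + b)^4) by (apply pow_le; lra).
      unfold c; nra. }
    eapply Rle_trans; [| apply (lam_ge_gap _ _ h)].
    replace (b + z - b) with z by ring.
    apply Rle_div_r; [apply Rmult_lt_0_compat; [lra | apply pow_lt; lra] |].
    assert (z^3 <= z) by (simpl; nra).
    assert (z * l0 <= c) by (apply Rle_div_r; lra).
    nra.
  - assert (hi : 0 < / l0 <= 1).
    { split; [apply Rinv_0_lt_compat; lra |].
      rewrite <- Rinv_1; apply Rinv_le_contravar; lra. }
    exists (-1 + / l0); split; [lra |].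
    eapply Rle_trans; [| apply lam_m1_ge; lra].
    replace (4 / (1 + (-1 + / l0))^2) with (4 * l0^2) by (field; lra); nra.
Qed.

Lemma lam_lt_iff b x y : -1 <= b -> b < x <= 1 -> b < y <= 1 -> (lam y b < lam x b <-> x < y).
Proof.
  intros hb hx hy; split; intros hlt.
  - destruct (Rtotal_order x y) as [? | [<- | hyx]]; [easy | lra |].
    pose proof (lam_decr_a b y x hb ltac:(lra) hyx ltac:(lra)); lra.
  - apply lam_decr_a; lra.
Qed.

Lemma lam_level_set b l0 : -1 <= b < 1 -> 1 <= l0 -> exists a, b < a <= 1 /\ lam a b = l0.
Proof.
  intros hb hl; destruct (Rle_lt_or_eq_dec 1 l0 hl) as [hgt1 | <-].
  2: { exists 1; split; [lra | apply lam_one; lra]. }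
  destruct (lam_unbounded b l0 hb hl) as [a1 [ha1 hl1]].
  destruct (Rle_lt_or_eq_dec _ _ hl1) as [hlt | heq]; [| now exists a1].
  destruct (Rle_lt_or_eq_dec _ _ (proj2 ha1)) as [ha1' | ->].
  2: { rewrite lam_one in hlt by lra; lra. }
  destruct (Ranalysis5.IVT_interv (fun a => l0 - lam a b) a1 1) as [a [ha ea]].
  - intros a ha; apply continuity_pt_minus; [apply continuity_pt_const; now intros ? ? |].
    apply lam_continuous_a; red; lra.
  - lra.
  - simpl; lra.
  - simpl; rewrite lam_one by lra; lra.
  - exists a; split; [lra |]; simpl in ea; lra.
Qed.

Definition root_a (l0 b : R) : R := epsilon (inhabits 0) (fun a => b < a <= 1 /\ lam a b = l0).

Lemma root_a_spec l0 b : -1 <= b < 1 -> 1 <= l0 ->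
  b < root_a l0 b <= 1 /\ lam (root_a l0 b) b = l0.
Proof. intros; unfold root_a; apply epsilon_spec, lam_level_set; auto. Qed.

(* The intermediate value theorem is applied to b |-> mu (root_a l0 b) b on [-1, b1];
   precomposing with the clamp to [-1, b1] makes it continuous at every point. *)
Definition clamp (lo hi t : R) : R := Rmax lo (Rmin hi t).

Lemma clamp_bounds lo hi t : lo <= hi -> lo <= clamp lo hi t <= hi.
Proof. intros; unfold clamp, Rmax, Rmin; repeat destruct Rle_dec; lra. Qed.

Lemma clamp_id lo hi t : lo <= t <= hi -> clamp lo hi t = t.
Proof. intros; unfold clamp, Rmax, Rmin; repeat destruct Rle_dec; lra. Qed.

Lemma clamp_continuous lo hi t0 : lo <= hi -> continuity_pt (clamp lo hi) t0.
Proof.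
  intros h eps heps; exists eps; split; [lra |].
  intros t [_ ht]; simpl in *; unfold R_dist in *.
  unfold clamp, Rmax, Rmin; repeat destruct Rle_dec; unfold Rabs in *;
    repeat destruct Rcase_abs; lra.
Qed.

Lemma continuity_pt_locally_gt f x l : continuity_pt f x -> l < f x -> locally x (fun y => l < f y).
Proof.
  intros hf hl; assert (he : 0 < f x - l) by lra.
  apply (filter_imp (fun y => Rabs (f y - f x) < mkposreal _ he)).
  - intros y hy; apply Rabs_lt_between in hy; simpl in hy; lra.
  - apply continuity_pt_locally, hf.
Qed.

Lemma continuity_pt_locally_lt f x l : continuity_pt f x -> f x < l -> locally x (fun y => f y < l).
Proof.
  intros hf hl; assert (he : 0 < l - f x) by lra.
  apply (filter_imp (fun y => Rabs (f y - f x) < mkposreal _ he)).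
  - intros y hy; apply Rabs_lt_between in hy; simpl in hy; lra.
  - apply continuity_pt_locally, hf.
Qed.

Lemma root_a_gt l0 b a : -1 <= b < 1 -> 1 <= l0 -> b < a <= 1 ->
  l0 < lam a b -> a < root_a l0 b.
Proof.
  intros hb hl ha hlt; destruct (root_a_spec l0 b hb hl) as [hr er].
  apply (lam_lt_iff b); [lra | lra | lra | now rewrite er].
Qed.

Lemma root_a_lt l0 b a : -1 <= b < 1 -> 1 <= l0 -> b < a <= 1 ->
  lam a b < l0 -> root_a l0 b < a.
Proof.
  intros hb hl ha hlt; destruct (root_a_spec l0 b hb hl) as [hr er].
  apply (lam_lt_iff b); [lra | lra | lra | now rewrite er].
Qed.

Lemma lam_clamp_continuous a b1 t0 : -1 <= b1 -> clamp (-1) b1 t0 < a <= 1 ->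
  continuity_pt (fun t => lam a (clamp (-1) b1 t)) t0.
Proof.
  intros hb1 ha; pose proof (clamp_bounds (-1) b1 t0 hb1).
  apply (continuity_pt_comp (clamp (-1) b1) (fun b => lam a b)).
  - apply clamp_continuous, hb1.
  - apply lam_continuous_b; red; lra.
Qed.

Lemma root_a_clamp_continuous l0 b1 t0 : -1 <= b1 < 1 -> 1 <= l0 ->
  continuity_pt (fun t => root_a l0 (clamp (-1) b1 t)) t0.
Proof.
  intros hb1 hl.
  assert (hbounds : forall t, -1 <= clamp (-1) b1 t <= b1) by (intros; apply clamp_bounds; lra).
  pose proof (hbounds t0) as hc; set (c := clamp (-1) b1 t0) in *.
  destruct (root_a_spec l0 c ltac:(lra) hl) as [ha0 ea0]; set (a0 := root_a l0 c) in *.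
  apply continuity_pt_locally; intros eps.
  set (e := Rmin eps (a0 - c) / 2).
  assert (he : 0 < e /\ e < eps /\ 2 * e <= a0 - c).
  { pose proof (Rmin_l eps (a0 - c)); pose proof (Rmin_r eps (a0 - c)).
    assert (0 < Rmin eps (a0 - c)) by (apply Rmin_glb_lt; [apply cond_pos | lra]).
    unfold e; lra. }
  assert (hnear : locally t0 (fun t => clamp (-1) b1 t < a0 - e)).
  { apply (continuity_pt_locally_lt (clamp (-1) b1)); [apply clamp_continuous; lra |].
    change (c < a0 - e); lra. }
  assert (below : locally t0 (fun t => a0 - e < root_a l0 (clamp (-1) b1 t))).
  { assert (hlam : locally t0 (fun t => l0 < lam (a0 - e) (clamp (-1) b1 t))).
    { apply (continuity_pt_locally_gt (fun t => lam (a0 - e) (clamp (-1) b1 t))).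
      - apply lam_clamp_continuous; [lra | change (c < a0 - e <= 1); lra].
      - rewrite <- ea0; apply (lam_lt_iff c); lra. }
    refine (filter_imp _ _ _ (filter_and _ _ hnear hlam)); intros t [ht hlt].
    apply root_a_gt; auto; specialize (hbounds t); lra. }
  assert (above : locally t0 (fun t => root_a l0 (clamp (-1) b1 t) < a0 + e)).
  { destruct (Rle_lt_dec (a0 + e) 1) as [hle | hgt].
    - assert (hlam : locally t0 (fun t => lam (a0 + e) (clamp (-1) b1 t) < l0)).
      { apply (continuity_pt_locally_lt (fun t => lam (a0 + e) (clamp (-1) b1 t))).
        - apply lam_clamp_continuous; [lra | change (c < a0 + e <= 1); lra].
        - rewrite <- ea0; apply (lam_lt_iff c); lra. }
      refine (filter_imp _ _ _ (filter_and _ _ hnear hlam)); intros t [ht hlt].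
      apply root_a_lt; auto; specialize (hbounds t); lra.
    - apply filter_forall; intros t.
      pose proof (hbounds t); destruct (root_a_spec l0 (clamp (-1) b1 t)); lra. }
  refine (filter_imp _ _ _ (filter_and _ _ below above)); intros t [h1 h2].
  change (Rabs (root_a l0 (clamp (-1) b1 t) - a0) < eps); apply Rabs_lt_between; lra.
Qed.

Lemma mu_root_clamp_continuous l0 b1 t0 : -1 <= b1 < 1 -> 1 <= l0 ->
  continuity_pt (fun t => mu (root_a l0 (clamp (-1) b1 t)) (clamp (-1) b1 t)) t0.
Proof.
  intros hb1 hl.
  set (s := clamp (-1) b1); set (r := fun t => root_a l0 (s t)).
  assert (hrs : forall t, s t < r t <= 1 /\ lam (r t) (s t) = l0).
  { intros t; apply root_a_spec; auto; pose proof (clamp_bounds (-1) b1 t); unfold s; lra. }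
  apply continuity_pt_ext with (fun t => l0 + 2 * Dp (r t) (s t) / (r t - s t)^3).
  { intros t; destruct (hrs t) as [ht hlt].
    change (l0 + 2 * Dp (r t) (s t) / (r t - s t)^3 = mu (r t) (s t)).
    rewrite <- hlt; unfold mu, lam; field; lra. }
  assert (hr : continuity_pt r t0) by (apply root_a_clamp_continuous; auto).
  assert (hs : continuity_pt s t0) by (apply clamp_continuous; lra).
  unfold Dp; repeat first
    [ apply continuity_pt_plus | apply continuity_pt_minus | apply continuity_pt_mult
    | apply continuity_pt_opp | apply continuity_pt_inv
    | apply continuity_pt_const; intros ? ?; reflexivity | apply continuity_pt_pow
    | assumption ].
  apply pow_nonzero; destruct (hrs t0); lra.
Qed.

Lemma mu_ge_inv_sq a b : 0 <= b -> b < a <= 1 -> / (1 - b)^2 <= mu a b.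
Proof.
  intros hb hab.
  assert (hD : 0 <= Dp a b) by (unfold Dp; apply Rmult_le_pos; [apply Rmult_le_pos |]; nra).
  assert (hQ : (1 - b)^2 <= Qp a b).
  { unfold Qp; replace ((1 - b)^2) with (1 * (1 - b) * 1 * (1 - b)) by ring.
    assert (1 <= (3 + a * b)^3) by (rewrite <- (pow1 3); apply pow_incr; nra).
    repeat apply Rmult_le_compat; nra. }
  assert (hs : 1 - b <= sqrt (Qp a b)).
  { rewrite <- (sqrt_pow2 (1 - b)) by lra; apply sqrt_le_1_alt, hQ. }
  assert (hz : 0 < (a - b)^3 <= (1 - b)^3) by (split; [apply pow_lt | apply pow_incr]; lra).
  apply Rle_trans with ((1 - b) / (1 - b)^3).
  - right; field; lra.
  - unfold mu, Rdiv; apply Rmult_le_compat; try lra.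
    + apply Rlt_le, Rinv_0_lt_compat, pow_lt; lra.
    + apply Rinv_le_contravar; lra.
Qed.

Lemma lam_mu_surj l0 m0 : inOmega l0 m0 -> exists a b, inA a b /\ lam a b = l0 /\ mu a b = m0.
Proof.
  intros [hl hm]; destruct (Rle_lt_or_eq_dec 1 m0 hm) as [hm1 | <-].
  - set (b1 := 1 - / m0).
    assert (hb1 : 0 < b1 < 1).
    { assert (0 < / m0 < 1) by (split; [apply Rinv_0_lt_compat | rewrite <- Rinv_1; apply Rinv_lt_contravar]; lra).
      unfold b1; lra. }
    set (g := fun t => mu (root_a l0 (clamp (-1) b1 t)) (clamp (-1) b1 t) - m0).
    destruct (Ranalysis5.IVT_interv g (-1) b1) as [z [hz gz]].
    + intros t _; apply continuity_pt_minus; [apply mu_root_clamp_continuous; lra |].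
      apply continuity_pt_const; now intros ? ?.
    + lra.
    + unfold g; rewrite clamp_id by lra.
      destruct (root_a_spec l0 (-1) ltac:(lra) hl).
      rewrite (proj2 (proj2 (mu_ge1 (root_a l0 (-1)) (-1) ltac:(red; lra))) eq_refl); lra.
    + unfold g; rewrite clamp_id by lra.
      destruct (root_a_spec l0 b1 ltac:(lra) hl).
      pose proof (mu_ge_inv_sq (root_a l0 b1) b1 ltac:(lra) ltac:(lra)) as hmu.
      replace (/ (1 - b1)^2) with (m0^2) in hmu by (unfold b1; field; lra); nra.
    + unfold g in gz; rewrite clamp_id in gz by lra.
      destruct (root_a_spec l0 z ltac:(lra) hl).
      exists (root_a l0 z), z; split; [red; lra | split; [easy | lra]].
  - destruct (root_a_spec l0 (-1) ltac:(lra) hl) as [hr er].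
    exists (root_a l0 (-1)), (-1); split; [red; lra | split; [easy |]].
    apply mu_ge1; [red; lra | reflexivity].
Qed.

Theorem theorem3p2 :
  (forall a al : R, inA a al ->
     exists! p : R * R, inOmega (fst p) (snd p) /\ sys a al (fst p) (snd p))
  /\
  (forall l m : R, inOmega l m ->
     exists! q : R * R, inA (fst q) (snd q) /\ sys (fst q) (snd q) l m)
  /\
  (forall a al l m : R, inA a al -> inOmega l m -> sys a al l m ->
     ((-1 < al /\ a < 1) <-> (1 < l /\ 1 < m))
     /\ (a = 1 <-> l = 1)
     /\ (al = -1 <-> m = 1)
     /\ ((a = 1 /\ al = -1) <-> (l = 1 /\ m = 1))).
Proof.
  split; [| split].
  - intros a al h; exists (lam a al, mu a al); split.
    + split; [split; [apply lam_ge1 | apply mu_ge1]; exact h | now apply sys_lam_mu].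
    + intros [l m] [ho hs]; destruct (sys_solution a al l m h ho hs) as [-> ->]; reflexivity.
  - intros l m ho; destruct (lam_mu_surj l m ho) as [a [al [h [<- <-]]]].
    exists (a, al); split; [split; [exact h | now apply sys_lam_mu] |].
    intros [a' al'] [h' hs]; destruct (sys_solution a' al' _ _ h' ho hs) as [e1 e2].
    destruct (lam_mu_inj a al a' al' h h' e1 e2) as [-> ->]; reflexivity.
  - intros a al l m h ho hs; destruct (sys_solution a al l m h ho hs) as [-> ->].
    pose proof (lam_ge1 a al h); pose proof (mu_ge1 a al h); destruct h as [? [? ?]].
    intuition lra.
Qed.
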